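(* Let $\mathcal{K}_1$ be an $\mathcal{ALCP}$ knowledge base over $(\mathcal{L}^1,N_C^1,N_R^1)$ and $\mathcal{K}_2$ one over $(\mathcal{L}^2,N_C^2,N_R^2)$, both ME-consistent. If $\mathcal{K}_1=\mathcal{K}_2$, $\mathcal{L}^1\subseteq\mathcal{L}^2$, $N_C^1\subseteq N_C^2$ and $N_R^1\subseteq N_R^2$, then for all concepts $C,D$ built over $N_C^1,N_R^1$ and all contexts $\kappa\in\mathcal{L}^1$, $\mathcal{B}_{\mathcal{K}_1}(C\sqsubseteq D\mid\kappa)=\mathcal{B}_{\mathcal{K}_2}(C\sqsubseteq D\mid\kappa)$, where each belief interval is computed with respect to the respective language.
   Context: For a propositional language $\mathcal{L}$ over a finite set $\mathrm{sig}(\mathcal{L})$ of variables, $\mathrm{Int}(\mathcal{L})$ is the set of truth assignments; $\mathcal{L}^1\subseteq\mathcal{L}^2$ means $\mathrm{sig}(\mathcal{L}^1)\subseteq\mathrm{sig}(\mathcal{L}^2)$. A probability distribution over $\mathcal{L}$ is $P:\mathrm{Int}(\mathcal{L})\to[0,1]$ summing to $1$, with $P(\phi)=\sum_{v\models\phi}P(v)$. A probabilistic constraint is $c_0+\sum_{i=1}^k c_i\,\mathsf{p}(\phi_i)\ge 0$ ($c_i\in\mathbb{R}$, $\phi_i\in\mathcal{L}$), satisfied by $P$ iff $c_0+\sum_ic_iP(\phi_i)\ge0$; $\mathrm{Mod}(\mathcal{R})$ is the set of distributions over $\mathcal{L}$ satisfying all constraints in $\mathcal{R}$; for consistent $\mathcal{R}$,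 $P^{ME}_{\mathcal{R}}$ is the unique maximizer in $\mathrm{Mod}(\mathcal{R})$ of $H(P)=-\sum_vP(v)\log P(v)$. Concepts over concept names $N_C$ and role names $N_R$: $C::=A\mid\neg C\mid C\sqcap C\mid\exists r.C$. An $\mathcal{L}$-GCI is $\langle C\sqsubseteq D:\kappa\rangle$, $\kappa\in\mathcal{L}$; an $\mathcal{L}$-TBox is a finite set of them; a KB over $(\mathcal{L},N_C,N_R)$ is $\mathcal{K}=(\mathcal{R},\mathcal{T})$ with constraints over $\mathcal{L}$ and GCIs using these symbols. A possible world $\mathcal{I}=(\Delta^{\mathcal{I}},\cdot^{\mathcal{I}},v^{\mathcal{I}})$ is a classical $\mathcal{ALC}$ interpretation of $N_C,N_R$ together with $v^{\mathcal{I}}\in\mathrm{Int}(\mathcal{L})$; it models $\langle C\sqsubseteq D:\kappa\rangle$ iff $v^{\mathcal{I}}\not\models\kappa$ or $C^{\mathcal{I}}\subseteq D^{\mathcal{I}}$. An $\mathcal{ALCP}$-interpretation $\mathcal{P}=(\mathfrak{I},P_{\mathfrak{I}})$ is a nonempty finite set of possible worlds with a probability distribution on it; $P^{\mathcal{P}}(v)=\sum_{\mathcal{I}\in\mathfrak{I},v^{\mathcal{I}}=v}P_{\mathfrak{I}}(\mathcal{I})$. $\mathcal{P}$ is an ME-$\mathcal{ALCP}$-model of $\mathcal{K}$ iff all its worlds model every GCI of $\mathcal{T}$ and $P^{\mathcal{P}}=P^{ME}_{\mathcal{R}}$; $\mathrm{Mod}_{ME}(\mathcal{K})$ is the set of these;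 $\mathcal{K}$ is ME-consistent iff it is nonempty. $\Pr_{\mathcal{P}}(C\sqsubseteq D\mid\kappa)=\big(\sum_{\mathcal{I}\in\mathfrak{I},v^{\mathcal{I}}\models\kappa,C^{\mathcal{I}}\subseteq D^{\mathcal{I}}}P_{\mathfrak{I}}(\mathcal{I})\big)/\big(\sum_{\mathcal{I}\in\mathfrak{I},v^{\mathcal{I}}\models\kappa}P_{\mathfrak{I}}(\mathcal{I})\big)$. The belief interval $\mathcal{B}_{\mathcal{K}}(C\sqsubseteq D\mid\kappa)=[\mathcal{B}^{s}_{\mathcal{K}},\mathcal{B}^{c}_{\mathcal{K}}]$ has as endpoints the infimum and supremum of $\Pr_{\mathcal{P}}(C\sqsubseteq D\mid\kappa)$ over $\mathcal{P}\in\mathrm{Mod}_{ME}(\mathcal{K})$. *)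

From HB Require Import structures.
From mathcomp Require Import all_boot all_order all_algebra.
From mathcomp Require Import finmap.
From Stdlib Require List.
From mathcomp Require Import all_classical all_reals all_analysis.

Set Implicit Arguments.
Unset Strict Implicit.
Unset Printing Implicit Defensive.

Import Order.TTheory GRing.Theory Num.Theory.
Local Open Scope classical_set_scope.
Local Open Scope ring_scope.

(* Propositional variables are natural numbers; a language L is given by its
   finite signature sig(L) : {fset nat}.  Int(L) = {ffun sig -> bool}. *)

Inductive pform : Type :=
  | FVar of nat
  | FTop
  | FNeg of pform
  | FAnd of pform & pform
  | FOr of pform & pform.

Fixpoint fvars (phi : pform) : seq nat :=
  match phi with
  | FVar x => [:: x]
  | FTop => [::]
  | FNeg p => fvars p
  | FAnd p q => fvars p ++ fvars q
  | FOr p q => fvars p ++ fvars q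
  end.

Definition form_in (sig : {fset nat}) (phi : pform) : bool :=
  all (fun x => x \in sig) (fvars phi).

Fixpoint feval (f : nat -> bool) (phi : pform) : bool :=
  match phi with
  | FVar x => f x
  | FTop => true
  | FNeg p => ~~ feval f p
  | FAnd p q => feval f p && feval f q
  | FOr p q => feval f p || feval f q
  end.

(* an interpretation of L, extended (irrelevantly) by false outside sig(L) *)
Definition asg (sig : {fset nat}) (v : {ffun sig -> bool}) (x : nat) : bool :=
  match (insub x : option sig) with Some y => v y | None => false end.

Definition models (sig : {fset nat}) (v : {ffun sig -> bool}) (phi : pform) :=
  feval (asg v) phi.

Section Prob.
Variable R : realType.

Definition is_dist (sig : {fset nat}) (P : {ffun sig -> bool} -> R) : Prop :=
  (forall v, 0 <= P v) /\ \sum_v P v = 1.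

Definition probf (sig : {fset nat}) (P : {ffun sig -> bool} -> R) (phi : pform) : R :=
  \sum_(v | models v phi) P v.

Record pcon := PCon { pc0 : R; pterms : seq (R * pform) }.

Definition pcon_in (sig : {fset nat}) (c : pcon) : bool :=
  all (fun t => form_in sig t.2) (pterms c).

Definition sat_pcon (sig : {fset nat}) (P : {ffun sig -> bool} -> R) (c : pcon) : Prop :=
  0 <= pc0 c + \sum_(t <- pterms c) t.1 * probf P t.2.

Definition ModR (sig : {fset nat}) (Rs : seq pcon) (P : {ffun sig -> bool} -> R) : Prop :=
  is_dist P /\ (forall c, List.In c Rs -> sat_pcon P c).

(* H(P) = - sum_v P(v) log P(v)   (ln 0 = 0 in mathcomp-analysis, so 0 log 0 = 0) *)
Definition entropy (sig : {fset nat}) (P : {ffun sig -> bool} -> R) : R :=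
  - \sum_v P v * ln (P v).

Definition is_ME (sig : {fset nat}) (Rs : seq pcon) (P : {ffun sig -> bool} -> R) : Prop :=
  ModR Rs P /\ (forall Q : {ffun sig -> bool} -> R, ModR Rs Q -> entropy Q <= entropy P).

End Prob.

Inductive concept : Type :=
  | CName of nat
  | CNeg of concept
  | CAnd of concept & concept
  | CEx of nat & concept.

Fixpoint cnames (C : concept) : seq nat :=
  match C with
  | CName A => [:: A]
  | CNeg C => cnames C
  | CAnd C D => cnames C ++ cnames D
  | CEx _ C => cnames C
  end.

Fixpoint rnames (C : concept) : seq nat :=
  match C with
  | CName _ => [::]
  | CNeg C => rnames C
  | CAnd C D => rnames C ++ rnames D
  | CEx r C => r :: rnames C
  end.

Definition concept_over (NC NR : {fset nat}) (C : concept) : bool :=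
  all (fun A => A \in NC) (cnames C) && all (fun r => r \in NR) (rnames C).

Record gci := GCI { glhs : concept; grhs : concept; gctx : pform }.

Definition gci_over (sig NC NR : {fset nat}) (g : gci) : bool :=
  [&& concept_over NC NR (glhs g), concept_over NC NR (grhs g) & form_in sig (gctx g)].

Definition kb (R : realType) := (seq (pcon R) * seq gci)%type.

Definition kb_over (R : realType) (sig NC NR : {fset nat}) (K : kb R) : bool :=
  all (pcon_in sig) K.1 && all (gci_over sig NC NR) K.2.

(* A classical ALC interpretation of N_C, N_R (nonempty domain) together with
   an interpretation of L. *)
Record world (sig NC NR : {fset nat}) := World {
  dom : Type;
  dom_elt : dom;
  cint : NC -> set dom;
  rint : NR -> dom -> dom -> Prop;
  wval : {ffun sig -> bool} }.

Section Ext.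
Variables (sig NC NR : {fset nat}) (w : world sig NC NR).

Fixpoint cext (C : concept) : set (dom w) :=
  match C with
  | CName A => match (insub A : option NC) with Some a => @cint sig NC NR w a | None => set0 end
  | CNeg C => ~` cext C
  | CAnd C D => cext C `&` cext D
  | CEx r C => match (insub r : option NR) with
               | Some s => [set x | exists y, @rint sig NC NR w s x y /\ cext C y]
               | None => set0
               end
  end.
End Ext.
Arguments cext {sig NC NR} w C.

Definition world_models_gci (sig NC NR : {fset nat}) (w : world sig NC NR) (g : gci) : Prop :=
  ~~ models (wval w) (gctx g) \/ cext w (glhs g) `<=` cext w (grhs g).

(* A nonempty finite set of possible worlds with a probability distribution on
   it, represented as a list of (world, probability) pairs. *)
Section ALCP.
Variable R : realType.
Variables sig NC NR : {fset nat}.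

Definition alcp := seq (world sig NC NR * R).

Definition is_alcp (W : alcp) : Prop :=
  W <> [::] /\ (forall p, List.In p W -> 0 <= p.2) /\ \sum_(p <- W) p.2 = 1.

Definition alcp_dist (W : alcp) (v : {ffun sig -> bool}) : R :=
  \sum_(p <- W | wval p.1 == v) p.2.

Definition ME_model (K : kb R) (W : alcp) : Prop :=
  is_alcp W /\
  (forall p g, List.In p W -> List.In g K.2 -> world_models_gci p.1 g) /\
  is_ME K.1 (alcp_dist W).

Definition ME_consistent (K : kb R) : Prop := exists W, ME_model K W.

Definition Prc (W : alcp) (C D : concept) (kappa : pform) : R :=
  (\sum_(p <- W | models (wval p.1) kappa && `[< cext p.1 C `<=` cext p.1 D >]) p.2) /
  (\sum_(p <- W | models (wval p.1) kappa) p.2).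

Definition belief_values (K : kb R) (C D : concept) (kappa : pform) : set R :=
  [set x | exists W, ME_model K W /\ x = Prc W C D kappa].

Definition belief_lo (K : kb R) C D kappa : R := inf (belief_values K C D kappa).
Definition belief_hi (K : kb R) C D kappa : R := sup (belief_values K C D kappa).

End ALCP.

(* Forgetting the symbols outside the smaller language maps ME-models of K over
   (L^2, N_C^2, N_R^2) to ME-models over (L^1, N_C^1, N_R^1), and conversely
   every ME-model over the small language lifts by giving each small-language
   world all its extensions to L^2 with equal shares of its probability.  Both
   maps leave Pr(C [= D | kappa) unchanged, so the two sets of attainable
   probabilities, and hence their infima and suprema, coincide.  The lift
   hinges on the maximum-entropy distribution over L^2 being the uniform
   extension of the one over L^1: every fiber of the restriction
   Int(L^2) -> Int(L^1) has the same size N, the uniform extension raises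
   entropy by exactly ln N, and grouping over a fiber never raises it by more. *)
From HB Require Import structures.
From mathcomp Require Import all_boot all_order all_algebra.
From mathcomp Require Import finmap.
From mathcomp Require Import all_classical all_reals all_analysis.
From mathcomp Require Import ring lra.
From Stdlib Require List.
Set Implicit Arguments.
Unset Strict Implicit.
Unset Printing Implicit Defensive.
Import Order.TTheory GRing.Theory Num.Theory.
Local Open Scope ring_scope.

Lemma neg_sum_xlnx_le (R : realType) (I : finType) (A : pred I) (a : I -> R) :
  (forall i, 0 <= a i) -> (0 < #|A|)%N ->
  - \sum_(i in A) a i * ln (a i) <=
  - (\sum_(i in A) a i) * ln (\sum_(i in A) a i) + (\sum_(i in A) a i) * ln #|A|%:R.
Proof.
move=> a_ge0 A_gt0; set s := \sum_(i in A) a i; set n : R := #|A|%:R.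
have n_gt0 : 0 < n by rewrite ltr0n.
have s_ge0 : 0 <= s by apply: sumr_ge0.
have termwise i : i \in A -> a i - s / n <= a i * ln (a i) - a i * ln s + a i * ln n.
  move=> iA; have [->|ai_neq0] := eqVneq (a i) 0.
    by rewrite !mul0r sub0r !subr0 addr0 oppr_le0 divr_ge0.
  have ai_gt0 : 0 < a i by rewrite lt_def ai_neq0 a_ge0.
  have ai_le_s : a i <= s by rewrite /s (bigD1 i) //= lerDl sumr_ge0.
  have s_gt0 : 0 < s by apply: lt_le_trans ai_le_s.
  set x := s / (a i * n).
  have x_gt0 : 0 < x by rewrite divr_gt0 // mulr_gt0.
  have ln_x : ln x <= x - 1.
    by have := @le_ln1Dx R (x - 1); rewrite addrCA subrr addr0; apply; lra.
  move: ln_x; rewrite ln_div ?posrE ?mulr_gt0 // lnM ?posrE // => ln_x.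
  have := ler_wpM2l (ltW ai_gt0) ln_x.
  have -> : a i * (x - 1) = s / n - a i by rewrite /x; field; rewrite !gt_eqF.
  lra.
have := ler_sum (index_enum I) termwise.
rewrite big_split /= sumrN sumr_const -/s !big_split /= sumrN -!mulr_suml -/s.
have -> : s / n *+ #|A| = s by rewrite -mulr_natr mulrAC -mulrA divff ?mulr1 // gt_eqF.
lra.
Qed.

Lemma all_In (T : Type) (P : pred T) (s : seq T) x : all P s -> List.In x s -> P x.
Proof. by elim: s => //= y s IH /andP[Py Ps] [<-|/IH]; auto. Qed.

Lemma In_mem (T : eqType) (s : seq T) x : List.In x s -> x \in s.
Proof. by elim: s => //= y s IH [->|/IH]; rewrite inE ?eqxx // => ->; rewrite orbT. Qed.

Lemma In_flatten_map (A B : Type) (f : A -> seq B) (s : seq A) y :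
  List.In y (flatten (map f s)) -> exists2 x, List.In x s & List.In y (f x).
Proof.
elim: s => //= x s IH /(List.in_app_or (f x)) [y_fx|/IH[x' x's y_fx']].
  by exists x; first left.
by exists x'; first right.
Qed.

Lemma feval_ext (f g : nat -> bool) phi :
  {in fvars phi, f =1 g} -> feval f phi = feval g phi.
Proof.
elim: phi => [x|| p IH | p IHp q IHq | p IHp q IHq] //= fg.
- by apply: fg; rewrite inE.
- by rewrite IH.
- by rewrite IHp ?IHq // => x xi; apply: fg; rewrite mem_cat xi ?orbT.
- by rewrite IHp ?IHq // => x xi; apply: fg; rewrite mem_cat xi ?orbT.
Qed.

Lemma asg_val (sig : {fset nat}) (v : {ffun sig -> bool}) (x : sig) : asg v (val x) = v x.
Proof. by rewrite /asg valK. Qed.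

Section Restriction.
Variable R : realType.
Variables sig1 sig2 : {fset nat}.
Hypothesis sig12 : fsubset sig1 sig2.

Notation Int1 := {ffun sig1 -> bool}.
Notation Int2 := {ffun sig2 -> bool}.

Definition restrict (v : Int2) : Int1 := [ffun x : sig1 => asg v (val x)].

Lemma models_restrict v phi : form_in sig1 phi -> models (restrict v) phi = models v phi.
Proof.
move=> /allP phi1; apply: feval_ext => x /phi1 x1.
by rewrite {1}/asg; case: insubP => [y _ <-|]; rewrite ?ffunE ?x1.
Qed.

Definition override (a : Int1) (v : Int2) : Int2 :=
  [ffun x : sig2 => if (insub (val x) : option sig1) is Some y then a y else v x].

Lemma restrict_override a v : restrict (override a v) = a.
Proof.
apply/ffunP => y; rewrite ffunE /asg.
have y2 : val y \in sig2 by apply: (fsubsetP sig12); exact: valP.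
case: insubP => [z _ zE|]; last by rewrite y2.
by rewrite ffunE zE valK.
Qed.

Lemma override_restrict b v : override (restrict v) (override b v) = v.
Proof.
apply/ffunP => x; rewrite !ffunE.
by case: insubP => [y _ yE|//]; rewrite ffunE yE asg_val.
Qed.

Definition fiber (a : Int1) := [pred v : Int2 | restrict v == a].

Lemma card_fiber_le a b : (#|fiber a| <= #|fiber b|)%N.
Proof.
have -> : #|fiber a| = #|[set override b v | v in fiber a]|.
  rewrite card_in_imset // => v w; rewrite !inE => /eqP va /eqP wa vw.
  by rewrite -(override_restrict b v) -(override_restrict b w) va wa vw.
apply: subset_leq_card; apply/fintype.subsetP => _ /imsetP[v _ ->].
by rewrite inE /= restrict_override.
Qed.

Definition fiber_size := #|fiber [ffun => false]|.

Lemma card_fiberE a : #|fiber a| = fiber_size.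
Proof. by apply/eqP; rewrite eqn_leq !card_fiber_le. Qed.

Lemma fiber_size_pos : (0 < fiber_size)%N.
Proof.
rewrite -(card_fiberE [ffun => false]); apply/card_gt0P.
by exists (override [ffun => false] [ffun => false]); rewrite inE /= restrict_override.
Qed.

Lemma fiber_size_gt0 : 0 < fiber_size%:R :> R.
Proof. by rewrite ltr0n fiber_size_pos. Qed.

Lemma fiber_size_neq0 : fiber_size%:R != 0 :> R.
Proof. exact: lt0r_neq0 fiber_size_gt0. Qed.

Definition marginal (Q : Int2 -> R) (a : Int1) : R := \sum_(v in fiber a) Q v.

Definition uniform_ext (P : Int1 -> R) (v : Int2) : R := P (restrict v) / fiber_size%:R.

Lemma sum_by_fibers (F : Int2 -> R) : \sum_v F v = \sum_a \sum_(v in fiber a) F v.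
Proof. by rewrite (partition_big restrict xpredT). Qed.

Lemma sum_fiber_const a (c : R) : \sum_(v in fiber a) c = c *+ fiber_size.
Proof. by rewrite sumr_const card_fiberE. Qed.

Lemma marginal_uniform_ext P : marginal (uniform_ext P) = P.
Proof.
apply/funext => a; rewrite /marginal /uniform_ext.
rewrite (eq_bigr (fun=> P a / fiber_size%:R)); last by move=> v /eqP ->.
by rewrite sum_fiber_const -[LHS]mulr_natr divfK // fiber_size_neq0.
Qed.

Lemma probf_marginal Q phi : form_in sig1 phi -> probf Q phi = probf (marginal Q) phi.
Proof.
move=> phi1; rewrite /probf (partition_big restrict (fun a => models a phi)).
  apply: eq_bigr => a a_phi; apply: eq_bigl => v; rewrite inE.
  by case: eqVneq => [va|]; rewrite ?andbF // andbT -models_restrict // va.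
by move=> v; rewrite models_restrict.
Qed.

Lemma sat_pcon_marginal Q c : pcon_in sig1 c -> sat_pcon Q c <-> sat_pcon (marginal Q) c.
Proof.
rewrite /sat_pcon /pcon_in => c1.
suff -> : \sum_(t <- pterms c) t.1 * probf Q t.2 =
          \sum_(t <- pterms c) t.1 * probf (marginal Q) t.2 by [].
elim: (pterms c) c1 => [|t ts IH] /=; first by rewrite !big_nil.
by case/andP=> t1 /IH ts_eq; rewrite !big_cons (probf_marginal Q t1) ts_eq.
Qed.

Lemma dist_marginal Q : is_dist Q -> is_dist (marginal Q).
Proof. by move=> [Q_ge0 Q1]; split=> [a|]; [apply: sumr_ge0 | rewrite -sum_by_fibers]. Qed.

Lemma dist_uniform_ext P : is_dist P -> is_dist (uniform_ext P).
Proof.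
move=> [P_ge0 P1]; split=> [v|]; first by rewrite divr_ge0 ?ler0n.
by rewrite sum_by_fibers -[in RHS]P1 -[in RHS](marginal_uniform_ext P).
Qed.

Lemma entropy_uniform_ext P : is_dist P ->
  entropy (uniform_ext P) = entropy P + ln fiber_size%:R.
Proof.
move=> [P_ge0 P1]; rewrite /entropy /uniform_ext sum_by_fibers.
transitivity (- \sum_a (P a * ln (P a) - P a * ln fiber_size%:R)); last first.
  by rewrite sumrB -mulr_suml P1 mul1r opprB addrC.
congr (- _); apply: eq_bigr => a _.
rewrite (eq_bigr (fun=> P a / fiber_size%:R * ln (P a / fiber_size%:R))); last first.
  by move=> v /eqP ->.
rewrite sum_fiber_const.
have [->|Pa_neq0] := eqVneq (P a) 0; first by rewrite !mul0r mul0rn subrr.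
have Pa_gt0 : 0 < P a by rewrite lt_def Pa_neq0 P_ge0.
rewrite ln_div ?posrE ?fiber_size_gt0 // -mulr_natr.
by field; rewrite fiber_size_neq0.
Qed.

Lemma entropy_le_marginal Q : is_dist Q ->
  entropy Q <= entropy (marginal Q) + ln fiber_size%:R.
Proof.
move=> [Q_ge0 Q1]; rewrite /entropy sum_by_fibers -sumrN.
have fiberwise a : - \sum_(v in fiber a) Q v * ln (Q v) <=
    - marginal Q a * ln (marginal Q a) + marginal Q a * ln fiber_size%:R.
  by rewrite -(card_fiberE a) neg_sum_xlnx_le // card_fiberE fiber_size_pos.
apply: le_trans (ler_sum _ (fun a _ => fiberwise a)) _.
rewrite big_split /= -mulr_suml -sum_by_fibers Q1 mul1r.
by under eq_bigr do rewrite mulNr; rewrite sumrN.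
Qed.

Lemma ModR_marginal Rs Q : all (pcon_in sig1) Rs -> ModR Rs Q -> ModR Rs (marginal Q).
Proof.
move=> Rs1 [Qd Qsat]; split=> [|c cRs]; first exact: dist_marginal.
by apply/(sat_pcon_marginal _ (all_In Rs1 cRs)); exact: Qsat.
Qed.

Lemma ModR_uniform_ext Rs P : all (pcon_in sig1) Rs -> ModR Rs P -> ModR Rs (uniform_ext P).
Proof.
move=> Rs1 [Pd Psat]; split=> [|c cRs]; first exact: dist_uniform_ext.
by apply/(sat_pcon_marginal _ (all_In Rs1 cRs)); rewrite marginal_uniform_ext; exact: Psat.
Qed.

Lemma is_ME_uniform_ext Rs P : all (pcon_in sig1) Rs -> is_ME Rs P -> is_ME Rs (uniform_ext P).
Proof.
move=> Rs1 [PMod Pmax]; split=> [|Q QMod]; first exact: ModR_uniform_ext.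
have := entropy_le_marginal QMod.1; have := Pmax _ (ModR_marginal Rs1 QMod).
rewrite entropy_uniform_ext; [lra | exact: PMod.1].
Qed.

Lemma is_ME_marginal Rs Q : all (pcon_in sig1) Rs -> is_ME Rs Q -> is_ME Rs (marginal Q).
Proof.
move=> Rs1 [QMod Qmax]; split=> [|P PMod]; first exact: ModR_marginal.
have := Qmax _ (ModR_uniform_ext Rs1 PMod); rewrite (entropy_uniform_ext PMod.1).
have := entropy_le_marginal QMod.1; lra.
Qed.

End Restriction.

Section Worlds.
Variable R : realType.
Variables sig1 NC1 NR1 sig2 NC2 NR2 : {fset nat}.
Hypotheses (sig12 : fsubset sig1 sig2) (NC12 : fsubset NC1 NC2) (NR12 : fsubset NR1 NR2).

Definition restrict_world (w : world sig2 NC2 NR2) : world sig1 NC1 NR1 :=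
  @World sig1 NC1 NR1 (dom w) (dom_elt w) (fun A => cext w (CName (val A)))
    (fun r x y => if (insub (val r) : option NR2) is Some s then rint s x y else False)
    (restrict sig1 (wval w)).

(* Concept and role names outside N_C^1, N_R^1 are interpreted as empty. *)
Definition extend_world (w : world sig1 NC1 NR1) (v : {ffun sig2 -> bool}) :
    world sig2 NC2 NR2 :=
  @World sig2 NC2 NR2 (dom w) (dom_elt w) (fun A => cext w (CName (val A)))
    (fun r x y => if (insub (val r) : option NR1) is Some s then rint s x y else False)
    v.

Lemma cext_restrict_world w C : concept_over NC1 NR1 C -> cext (restrict_world w) C = cext w C.
Proof.
rewrite /concept_over; elim: C => [A|C IH|C IHC D IHD|r C IH] /=.
- rewrite andbT => /andP[A1 _]; case: insubP => [a _ <-//|]; by rewrite A1.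
- by move=> /IH ->.
- by rewrite !all_cat => /andP[/andP[C1 D1] /andP[C1' D1']]; rewrite IHC ?C1 // IHD ?D1.
- move=> /andP[C1 /andP[r1 C1']]; rewrite IH ?C1 ?C1' //.
  case: insubP => [s _ <-|]; last by rewrite r1.
  by case: insubP => [//|]; rewrite (fsubsetP NR12 _ (valP s)).
Qed.

Lemma cext_extend_world w v C : concept_over NC1 NR1 C -> cext (extend_world w v) C = cext w C.
Proof.
rewrite /concept_over; elim: C => [A|C IH|C IHC D IHD|r C IH] /=.
- rewrite andbT => /andP[A1 _]; case: insubP => [a _ <-//|]; by rewrite (fsubsetP NC12 _ A1).
- by move=> /IH ->.
- by rewrite !all_cat => /andP[/andP[C1 D1] /andP[C1' D1']]; rewrite IHC ?C1 // IHD ?D1.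
- move=> /andP[C1 /andP[r1 C1']]; rewrite IH ?C1 ?C1' //.
  case: insubP => [s _ ->|]; last by rewrite (fsubsetP NR12 _ r1).
  by case: insubP => [//|]; rewrite r1.
Qed.

Lemma models_gci_restrict_world w g : gci_over sig1 NC1 NR1 g ->
  world_models_gci w g -> world_models_gci (restrict_world w) g.
Proof.
move=> /and3P[C1 D1 k1].
by rewrite /world_models_gci /= models_restrict // !cext_restrict_world.
Qed.

Lemma models_gci_extend_world w v g : restrict sig1 v = wval w -> gci_over sig1 NC1 NR1 g ->
  world_models_gci w g -> world_models_gci (extend_world w v) g.
Proof.
move=> vw /and3P[C1 D1 k1].
by rewrite /world_models_gci /= -(models_restrict v k1) vw !cext_extend_world.
Qed.

Definition restrict_alcp (W : alcp R sig2 NC2 NR2) : alcp R sig1 NC1 NR1 :=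
  [seq (restrict_world p.1, p.2) | p <- W].

Lemma alcp_dist_restrict W : alcp_dist (restrict_alcp W) = marginal (alcp_dist W).
Proof.
apply/funext => a; rewrite /alcp_dist /marginal big_map /=.
rewrite (partition_big (fun p : world sig2 NC2 NR2 * R => wval p.1) (fiber sig2 a)) //.
apply: eq_bigr => v /eqP va; apply: eq_bigl => p /=.
by case: (eqVneq (wval p.1) v) => [->|]; rewrite ?va ?eqxx ?andbF.
Qed.

Lemma ME_model_restrict (K : kb R) W : kb_over sig1 NC1 NR1 K ->
  ME_model K W -> ME_model K (restrict_alcp W).
Proof.
move=> /andP[K1 T1] [[W_neq0 [W_ge0 W1]] [W_gci W_ME]].
split; [split; [|split]|split].
- by case: W W_neq0 {W_ge0 W1 W_gci W_ME}.
- by move=> _ /List.in_map_iff[p [<- pW]]; exact: W_ge0.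
- by rewrite big_map.
- move=> _ g /List.in_map_iff[p [<- pW]] gT.
  by apply: models_gci_restrict_world; [exact: all_In T1 gT | exact: W_gci].
- by rewrite alcp_dist_restrict; exact: is_ME_marginal.
Qed.

Lemma Prc_restrict W C D kappa : concept_over NC1 NR1 C -> concept_over NC1 NR1 D ->
  form_in sig1 kappa -> Prc (restrict_alcp W) C D kappa = Prc W C D kappa.
Proof.
move=> C1 D1 k1; rewrite /Prc !big_map /=.
by congr (_ / _); apply: eq_bigl => p /=; rewrite models_restrict // !cext_restrict_world.
Qed.

Definition lift_world (p : world sig1 NC1 NR1 * R) : alcp R sig2 NC2 NR2 :=
  [seq (extend_world p.1 v, p.2 / (fiber_size sig1 sig2)%:R)
  | v <- enum (fiber sig2 (wval p.1))].

Definition lift_alcp (W : alcp R sig1 NC1 NR1) : alcp R sig2 NC2 NR2 :=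
  flatten (map lift_world W).

Lemma sum_lift_alcp W (P2 : pred (world sig2 NC2 NR2)) (P1 : pred (world sig1 NC1 NR1)) :
  (forall w v, restrict sig1 v = wval w -> P2 (extend_world w v) = P1 w) ->
  \sum_(q <- lift_alcp W | P2 q.1) q.2 = \sum_(p <- W | P1 p.1) p.2.
Proof.
move=> P21; rewrite big_flatten big_map [RHS]big_mkcond; apply: eq_bigr => p _.
rewrite big_map /= big_enum_cond /=.
rewrite (eq_bigl (fun v => (v \in fiber sig2 (wval p.1)) && P1 p.1)); last first.
  by move=> v; case: (boolP (v \in _)) => //= /eqP; exact: P21.
case: (P1 p.1); last by rewrite big_pred0 // => v; rewrite andbF.
rewrite (eq_bigl (mem (fiber sig2 (wval p.1)))); last by move=> v; rewrite andbT.
by rewrite sumr_const card_fiberE // -[LHS]mulr_natr divfK // fiber_size_neq0.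
Qed.

Lemma alcp_dist_lift W : alcp_dist (lift_alcp W) = uniform_ext (alcp_dist W).
Proof.
apply/funext => v; rewrite /alcp_dist /uniform_ext big_flatten big_map mulr_suml.
rewrite [RHS]big_mkcond; apply: eq_bigr => p _.
rewrite big_map /= big_enum_cond /=.
case: eqVneq => [pv|pv].
  rewrite (big_pred1 v) // => u /=; rewrite inE /=.
  by case: (eqVneq u v) => [->|]; rewrite ?andbT ?andbF ?pv ?eqxx.
rewrite big_pred0 // => u; rewrite inE /=.
case: (eqVneq u v) => [->|]; rewrite ?andbT ?andbF //.
by apply/negP => /eqP vp; rewrite vp eqxx in pv.
Qed.

Lemma In_lift_alcp W q : List.In q (lift_alcp W) ->
  exists p v, [/\ List.In p W, restrict sig1 v = wval p.1 &
                  q = (extend_world p.1 v, p.2 / (fiber_size sig1 sig2)%:R)].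
Proof.
case/(In_flatten_map (f := lift_world))=> p pW /List.in_map_iff[v [<- /In_mem]].
by rewrite mem_enum inE => /eqP vp; exists p, v.
Qed.

Lemma ME_model_lift (K : kb R) W : kb_over sig1 NC1 NR1 K ->
  ME_model K W -> ME_model K (lift_alcp W).
Proof.
move=> /andP[K1 T1] [[W_neq0 [W_ge0 W1]] [W_gci W_ME]].
have lift1 : \sum_(q <- lift_alcp W) q.2 = 1.
  by rewrite (@sum_lift_alcp W predT predT).
split; [split; [|split]|split] => //.
- by move=> lift_nil; move: lift1; rewrite lift_nil big_nil => /eqP; rewrite eq_sym oner_eq0.
- by move=> _ /In_lift_alcp[p [v [pW [_ ->]]]]; rewrite divr_ge0 ?ler0n ?W_ge0.
- move=> _ g /In_lift_alcp[p [v [pW [vp ->]]]] gT.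
  by apply: models_gci_extend_world; [exact: vp | exact: all_In T1 gT | exact: W_gci].
- by rewrite alcp_dist_lift; exact: is_ME_uniform_ext.
Qed.

Lemma Prc_lift W C D kappa : concept_over NC1 NR1 C -> concept_over NC1 NR1 D ->
  form_in sig1 kappa -> Prc (lift_alcp W) C D kappa = Prc W C D kappa.
Proof.
move=> C1 D1 k1.
have kappa_lift w v : restrict sig1 v = wval w ->
    models (wval (extend_world w v)) kappa = models (wval w) kappa.
  by move=> vw; rewrite -(models_restrict v k1) vw.
rewrite /Prc (@sum_lift_alcp W (fun w => models (wval w) kappa) _ kappa_lift).
rewrite (@sum_lift_alcp W
    (fun w => models (wval w) kappa && `[< (cext w C `<=` cext w D)%classic >])
    (fun w => models (wval w) kappa && `[< (cext w C `<=` cext w D)%classic >])) //.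
by move=> w v vw; rewrite kappa_lift // !cext_extend_world.
Qed.

Lemma belief_values_extend (K : kb R) C D kappa : kb_over sig1 NC1 NR1 K ->
  concept_over NC1 NR1 C -> concept_over NC1 NR1 D -> form_in sig1 kappa ->
  belief_values sig1 NC1 NR1 K C D kappa = belief_values sig2 NC2 NR2 K C D kappa.
Proof.
move=> K1 C1 D1 k1; apply/seteqP; split=> _ [W [W_ME ->]].
- by exists (lift_alcp W); rewrite Prc_lift //; split=> //; exact: ME_model_lift.
- by exists (restrict_alcp W); rewrite Prc_restrict //; split=> //; exact: ME_model_restrict.
Qed.

End Worlds.

Theorem theorem7 (R : realType) (sig1 NC1 NR1 sig2 NC2 NR2 : {fset nat}) (K : kb R) :
  kb_over sig1 NC1 NR1 K -> kb_over sig2 NC2 NR2 K ->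
  ME_consistent sig1 NC1 NR1 K -> ME_consistent sig2 NC2 NR2 K ->
  fsubset sig1 sig2 -> fsubset NC1 NC2 -> fsubset NR1 NR2 ->
  forall (C D : concept) (kappa : pform),
    concept_over NC1 NR1 C -> concept_over NC1 NR1 D -> form_in sig1 kappa ->
    belief_lo sig1 NC1 NR1 K C D kappa = belief_lo sig2 NC2 NR2 K C D kappa /\
    belief_hi sig1 NC1 NR1 K C D kappa = belief_hi sig2 NC2 NR2 K C D kappa.
Proof.
move=> K1 _ _ _ sig12 NC12 NR12 C D kappa C1 D1 k1.
by rewrite /belief_lo /belief_hi (belief_values_extend sig12 NC12 NR12 K1 C1 D1 k1).
Qed.
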